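(* Let $A,B,C\in \mathbb{C}^{n\times n}$ satisfy $ABA=ACA$. If $(AC)^{\#}$ and $(BA)^{\#}$ exist, then $(AC)^{\#}$ is similar to $(BA)^{\#}$.
   Context: A matrix $M\in \mathbb{C}^{n\times n}$ is group invertible if there exists $X$ with $MX=XM$, $XMX=X$, $MXM=M$; such $X$ is unique and denoted $M^{\#}$ (the group inverse). Two matrices $M,N$ are similar if $M=S^{-1}NS$ for some invertible $S$. *)

From mathcomp Require Import all_boot all_order all_algebra.
From mathcomp Require Import complex.
From mathcomp Require Import reals.
Set Implicit Arguments. Unset Strict Implicit. Unset Printing Implicit Defensive.
Import GRing.Theory Num.Theory.
Local Open Scope ring_scope.

Definition is_group_inverse (F : nzRingType) (n : nat) (M X : 'M[F]_n) : Prop :=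
  [/\ M *m X = X *m M, X *m M *m X = X & M *m X *m M = M].

Definition similar_mx (F : comUnitRingType) (n : nat) (M N : 'M[F]_n) : Prop :=
  exists S : 'M[F]_n, S \in unitmx /\ M = invmx S *m N *m S.

From mathcomp Require Import all_boot all_order all_algebra.
From mathcomp Require Import complex reals.
Import GRing.Theory Num.Theory.
Set Implicit Arguments. Unset Strict Implicit. Unset Printing Implicit Defensive.
Local Open Scope ring_scope.

(* Put M = AC, N = BA and W = A.  Then MW = WN and M^2 = W(CAC), while
   N^2 = B(ABA) = B(ACA) shows rank N <= rank M.  The intertwining MW = WN gives
   X(XW) = (XW)Y, but XW need not be invertible.  Since
   rank (I - MX) = n - rank M <= rank (I - NY), some invertible U puts the rows
   of (I - MX)U inside the row space of I - NY; then K = (I - MX)U satisfies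
   XK = KY = KN = 0, and S = XW + K is invertible with XS = SY. *)

Section GroupInverse.
Variables (R : nzRingType) (n : nat) (M X : 'M[R]_n).
Hypothesis gMX : is_group_inverse M X.

Lemma grinv2_mul : X *m X *m M = X.
Proof. by case: gMX => MX XMX _; rewrite -mulmxA -MX mulmxA. Qed.

Lemma mul_grinv2 : M *m X *m X = X.
Proof. by case: gMX => MX XMX _; rewrite MX. Qed.

Lemma grinv_mul2 : X *m M *m M = M.
Proof. by case: gMX => MX _ MXM; rewrite -MX. Qed.

Lemma mul2_grinv : M *m M *m X = M.
Proof. by case: gMX => MX _ MXM; rewrite -mulmxA MX mulmxA. Qed.

Definition ker_proj : 'M[R]_n := 1%:M - M *m X.

Lemma ker_proj_mul : ker_proj *m M = 0.
Proof. by case: gMX => _ _ MXM; rewrite mulmxBl mul1mx MXM subrr. Qed.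

Lemma grinv_mul_ker_proj : X *m ker_proj = 0.
Proof. by case: gMX => _ XMX _; rewrite mulmxBr mulmx1 mulmxA XMX subrr. Qed.

Lemma ker_proj_mul_grinv : ker_proj *m X = 0.
Proof. by rewrite mulmxBl mul1mx mul_grinv2 subrr. Qed.

End GroupInverse.

Section GroupInverseRank.
Variables (F : fieldType) (n : nat) (M X : 'M[F]_n).
Hypothesis gMX : is_group_inverse M X.

Lemma mxrank_sqr_grinv : \rank (M *m M) = \rank M.
Proof.
apply/eqP; rewrite eqn_leq mxrankM_maxl /=.
by rewrite -{1}(grinv_mul2 gMX) -mulmxA mxrankM_maxr.
Qed.

Lemma mxrank_ker_proj : \rank (ker_proj M X) = (n - \rank M)%N.
Proof.
rewrite -mxrank_ker; apply: eqmx_rank; rewrite sub_kermx ker_proj_mul // eqxx /=.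
have -> : kermx M = kermx M *m ker_proj M X.
  by rewrite mulmxBr mulmx1 mulmxA mulmx_ker mul0mx subr0.
exact: submxMl.
Qed.

End GroupInverseRank.

Section Intertwining.
Variables (R : nzRingType) (n : nat) (M N X Y W : 'M[R]_n).
Hypotheses (gMX : is_group_inverse M X) (gNY : is_group_inverse N Y).
Hypothesis MW_WN : M *m W = W *m N.

Lemma grinv_intertwine_step : X *m W = X *m X *m W *m N.
Proof. by rewrite -{1}(grinv2_mul gMX) -!mulmxA MW_WN. Qed.

Lemma grinv_intertwine_proj : X *m W *m (N *m Y) = X *m W.
Proof.
by rewrite grinv_intertwine_step -!mulmxA [N *m (N *m Y)]mulmxA mul2_grinv.
Qed.

Lemma grinv_intertwine : X *m W *m Y = X *m X *m W.
Proof.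
by rewrite grinv_intertwine_step -!mulmxA (mulmxA X W) grinv_intertwine_proj.
Qed.

End Intertwining.

Lemma mxrank_leq_unit_submx (F : fieldType) m k n
    (P : 'M[F]_(m, n)) (Q : 'M[F]_(k, n)) :
  (\rank P <= \rank Q)%N -> exists2 U : 'M_n, U \in unitmx & (P *m U <= Q)%MS.
Proof.
move=> lePQ; pose V := pid_mx (\rank P) *m row_base Q : 'M_(m, n).
have rV : \rank V = \rank P.
  by rewrite mxrankMfree ?row_base_free // rank_pid_mx // rank_leq_row.
have [U uU defV] := eq_rank_unitmx (esym rV); exists U => //.
by rewrite -defV -(eq_row_base Q) submxMl.
Qed.

Lemma unitmx_ker0 (F : fieldType) n (S : 'M[F]_n) :
  (forall v : 'M_n, v *m S = 0 -> v = 0) -> S \in unitmx.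
Proof. by move=> inj; rewrite -row_free_unit -kermx_eq0 (inj _ (mulmx_ker S)). Qed.

Lemma similar_grinv_intertwined (F : fieldType) n (M N X Y W Z : 'M[F]_n) :
  is_group_inverse M X -> is_group_inverse N Y ->
  M *m W = W *m N -> M *m M = W *m Z -> (\rank N <= \rank M)%N ->
  similar_mx X Y.
Proof.
move=> gMX gNY MW_WN MM_WZ leNM.
have [U uU] : exists2 U, U \in unitmx & (ker_proj M X *m U <= ker_proj N Y)%MS.
  by apply: mxrank_leq_unit_submx; rewrite !mxrank_ker_proj // leq_sub2l.
case/submxP=> D PU_DQ; pose K := ker_proj M X *m U; pose S := X *m W + K.
have XK : X *m K = 0 by rewrite /K mulmxA (grinv_mul_ker_proj gMX) mul0mx.
have KN : K *m N = 0 by rewrite /K PU_DQ -mulmxA (ker_proj_mul gNY) mulmx0.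
have KY : K *m Y = 0 by rewrite /K PU_DQ -mulmxA (ker_proj_mul_grinv gNY) mulmx0.
have XS_SY : X *m S = S *m Y.
  by rewrite mulmxDr mulmxDl XK KY !addr0 (grinv_intertwine gMX gNY) // mulmxA.
have uS : S \in unitmx.
  apply: unitmx_ker0 => v vS0.
  have vXW : v *m (X *m W) = 0.
    (* right multiplication by NY fixes XW and kills K *)
    move/(congr1 (mulmx^~ (N *m Y))): vS0.
    rewrite mulmxDr mulmxDl mul0mx -(mulmxA v K) (mulmxA K) KN mul0mx mulmx0.
    by rewrite addr0 -mulmxA (grinv_intertwine_proj gMX gNY).
  have vK : v *m K = 0 by move: vS0; rewrite mulmxDr vXW add0r.
  have vP : v *m ker_proj M X = 0.
    by rewrite -(mulmxK uU (v *m _)) -(mulmxA v) vK mul0mx.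
  have vM : v *m M = 0.
    by rewrite -(grinv_mul2 gMX) -(mulmxA X) MM_WZ !mulmxA -(mulmxA v) vXW mul0mx.
  by move: vP; rewrite mulmxBr mulmx1 mulmxA vM mul0mx subr0.
exists (invmx S); split; first by rewrite unitmx_inv.
by rewrite invmxK -XS_SY mulmxK.
Qed.

Local Open Scope complex_scope.

Theorem corollary3p2 (R : realType) (n : nat) (A B C X Y : 'M[R[i]]_n) :
  A *m B *m A = A *m C *m A ->
  is_group_inverse (A *m C) X ->
  is_group_inverse (B *m A) Y ->
  similar_mx X Y.
Proof.
move=> ABA_ACA gX gY.
apply: (similar_grinv_intertwined (W := A) (Z := C *m (A *m C)) gX gY).
- by rewrite mulmxA ABA_ACA.
- by rewrite !mulmxA.
rewrite -(mxrank_sqr_grinv gY).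
have -> : B *m A *m (B *m A) = B *m (A *m C) *m A by rewrite -!mulmxA (mulmxA A B) ABA_ACA !mulmxA.
by rewrite (leq_trans (mxrankM_maxl _ _)) ?mxrankM_maxr.
Qed.
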